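(* Assume $p=2$ and let $s\ge1$. Then $V^{s-1}:K\to W_s(K)$ induces an isomorphism $\mathrm{fil}'_2K/\mathrm{fil}'_1K\xrightarrow{\sim}\mathrm{fil}'_2W_s(K)/\mathrm{fil}'_1W_s(K)$.
   Context: $K$ is a complete discrete valuation field of characteristic $p>0$ with normalized valuation $\mathrm{ord}_K$. $W_s(K)$: Witt vectors of length $s$, elements $(a_{s-1},\dots,a_0)$, $V(a_{s-1},\dots,a_0)=(0,a_{s-1},\dots,a_0)$, $W_1(K)=K$. $\mathrm{ord}_K(a)=\min_ip^i\mathrm{ord}_K(a_i)$, $\mathrm{fil}_nW_s(K)=\{a:\mathrm{ord}_K(a)\ge-n\}$. For $m\ge1$, with $s'=\min\{\mathrm{ord}_p(m),s\}$, $\mathrm{fil}'_mW_s(K)=\mathrm{fil}_{m-1}W_s(K)+V^{s-s'}\mathrm{fil}_mW_{s'}(K)$. *)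

From HB Require Import structures.
From mathcomp Require Import all_boot all_order all_algebra.
Set Implicit Arguments. Unset Strict Implicit. Unset Printing Implicit Defensive.
Import Order.TTheory GRing.Theory Num.Theory.
Local Open Scope ring_scope.

(* mp k = Z[T_0, ..., T_{k-1}], with T_{k-1} the outermost variable. *)
Fixpoint mp (k : nat) : idomainType :=
  if k is k'.+1 then {poly mp k'} else int.

Fixpoint mvar (k : nat) (i : nat) : mp k :=
  match k as k0 return mp k0 with
  | 0 => 0
  | k'.+1 => if i == k' then ('X : {poly mp k'}) else (mvar k' i)%:P
  end.

(* coefficientwise Euclidean division by an integer (used only for exact
   divisions) *)
Fixpoint mdivz (k : nat) : mp k -> int -> mp k :=
  match k as k0 return mp k0 -> int -> mp k0 with
  | 0 => fun q d => ((q : int) %/ d)%Z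
  | k'.+1 => fun q d => map_poly (fun c : mp k' => @mdivz k' c d) (q : {poly mp k'})
  end.

Fixpoint mev (A : comNzRingType) (k : nat) : mp k -> (nat -> A) -> A :=
  match k as k0 return mp k0 -> (nat -> A) -> A with
  | 0 => fun q _ => (q : int)%:~R
  | k'.+1 => fun q x =>
      \sum_(i < size (q : {poly mp k'})) @mev A k' (q : {poly mp k'})`_i x * x k' ^+ i
  end.

Definition wX (s j : nat) : mp (2 * s) := mvar (2 * s) j.
Definition wY (s j : nat) : mp (2 * s) := mvar (2 * s) (s + j).

Definition wittpol (p s n : nat) (Z : nat -> mp (2 * s)) : mp (2 * s) :=
  \sum_(i < n.+1) (p ^ i)%:R * Z i ^+ (p ^ (n - i)).

(* [:: S_0; ...; S_n ], the Witt addition polynomials, defined by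
   W_n(S) = W_n(X) + W_n(Y), i.e.
   S_n = (W_n(X) + W_n(Y) - sum_{i<n} p^i S_i^(p^(n-i))) / p^n   (exact). *)
Fixpoint Slist (p s n : nat) : seq (mp (2 * s)) :=
  match n with
  | 0 => [:: wX s 0 + wY s 0]
  | n'.+1 =>
      let l := Slist p s n' in
      rcons l (mdivz
        (@wittpol p s n (wX s) + @wittpol p s n (wY s)
         - \sum_(i < n) (p ^ i)%:R * (nth 0 l i) ^+ (p ^ (n - i)))
        (p ^ n)%:Z)
  end.

Definition Spol (p s n : nat) : mp (2 * s) := nth 0 (Slist p s n) n.

(* Paper's indexing: a = (a_{s-1}, ..., a_0) is stored as a : 'I_s -> K with
   a i = a_i.  The usual Witt coordinate x_j is a_{s-1-j}. *)
Definition wvec (K : Type) (s : nat) := {ffun 'I_s -> K}.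

Definition wget (K : nzRingType) (s : nat) (a : wvec K s) (j : nat) : K :=
  match (insub j : option 'I_s) with Some i => a i | None => 0 end.

Definition wadd (p : nat) (K : comNzRingType) (s : nat) (a b : wvec K s)
  : wvec K s :=
  [ffun i : 'I_s =>
     mev (Spol p s (s - 1 - i))
         (fun j => if (j < s)%N then wget a (s - 1 - j)
                   else wget b (s - 1 - (j - s)))].

(* Verschiebung iterated: V^(s - s') : W_{s'}(K) -> W_s(K) for s' <= s;
   V(a_{s-1},...,a_0) = (0,a_{s-1},...,a_0), so V^(s-s') a has
   i-th component a_i for i < s' and 0 otherwise. *)
Definition Vto (K : nzRingType) (s' s : nat) (a : wvec K s') : wvec K s :=
  [ffun i : 'I_s => wget a i].

(* v a is meaningful for a != 0; ord_K(0) = +oo is handled by the case a = 0. *)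
Definition is_normalized_dvaluation (K : fieldType) (v : K -> int) : Prop :=
  [/\ forall a b : K, a != 0 -> b != 0 -> v (a * b) = v a + v b,
      forall a b : K, a != 0 -> b != 0 -> a + b != 0 ->
        Num.min (v a) (v b) <= v (a + b)
    & exists pi : K, pi != 0 /\ v pi = 1].

(* "ord_K(x) >= N" with ord_K(0) = +oo *)
Definition ord_ge (K : fieldType) (v : K -> int) (x : K) (N : int) : Prop :=
  x = 0 \/ N <= v x.

Definition dv_complete (K : fieldType) (v : K -> int) : Prop :=
  forall u : nat -> K,
    (forall N : int, exists n0 : nat, forall m n : nat,
        (n0 <= m)%N -> (n0 <= n)%N -> ord_ge v (u m - u n) N) ->
    exists l : K, forall N : int, exists n0 : nat, forall n : nat,
        (n0 <= n)%N -> ord_ge v (u n - l) N.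

Definition fil (p : nat) (K : fieldType) (v : K -> int) (n : nat) (s : nat)
  (a : wvec K s) : Prop :=
  forall i : 'I_s, a i = 0 \/ - (n%:Z) <= (p ^ i)%:Z * v (a i).

Definition filp (p : nat) (K : fieldType) (v : K -> int) (m : nat) (s : nat)
  (x : wvec K s) : Prop :=
  exists (y : wvec K s) (z : wvec K (minn (logn p m) s)),
    [/\ fil p v (m - 1) y, fil p v m z & x = wadd p y (Vto s z)].

From HB Require Import structures.
From mathcomp Require Import all_boot all_order all_algebra.
From mathcomp Require Import zify.
Import Order.TTheory GRing.Theory Num.Theory.
Set Implicit Arguments. Unset Strict Implicit. Unset Printing Implicit Defensive.
Local Open Scope ring_scope.

(* Once one of X_j, Y_j is set to 0 for every j < n, the Witt addition
   polynomial S_n becomes X_n + Y_n: the recursion defining S_n is then solved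
   by X_i + Y_i, since (X_j + Y_j)^(p^k) = X_j^(p^k) + Y_j^(p^k).  Hence a sum
   of Witt vectors is computed coordinatewise as long as, below each
   coordinate, one of the summands vanishes.  This applies to every sum
   involving V^(s-1) a, and gives fil'_1 W_s(K) = fil_0 W_s(K) and
   fil'_2 W_s(K) = fil_1 W_s(K) + V^(s-1) fil_2 K.  For i >= 1,
   2^i ord(y_i) >= -1 forces 2^i ord(y_i) >= 0, so fil_1 W_s(K) only differs
   from fil_0 W_s(K) in the coordinate of index 0, which is the image of
   V^(s-1). *)

Fixpoint mkill (Z : pred nat) (k : nat) : {rmorphism mp k -> mp k} :=
  match k as k0 return {rmorphism mp k0 -> mp k0} with
  | 0 => (idfun : {rmorphism int -> int})
  | k'.+1 =>
      if Z k' then ((polyC \o mkill Z k') \o horner_eval 0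
                     : {rmorphism {poly mp k'} -> {poly mp k'}})
      else (map_poly (mkill Z k') : {rmorphism {poly mp k'} -> {poly mp k'}})
  end.

Lemma mkillS (Z : pred nat) k (q : mp k.+1) :
  mkill Z k.+1 q = if Z k then (mkill Z k (q : {poly mp k})`_0)%:P
                   else map_poly (mkill Z k) (q : {poly mp k}).
Proof. by rewrite /=; case: (Z k); rewrite //= horner_evalE horner_coef0. Qed.

Lemma mdivz0 k d : @mdivz k 0 d = 0.
Proof. by case: k => [|k] /=; [exact: div0z | exact: map_poly0]. Qed.

Lemma mulKmdivz k (n : nat) (q : mp k) : (0 < n)%N -> mdivz (n%:R * q) n = q.
Proof.
move=> n_gt0; elim: k q => [|k IHk] q /=.
  change ((((n%:R : int) * q) %/ n)%Z = q).
  by rewrite natz mulKz // eqz_nat -lt0n.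
apply/polyP => i; rewrite coef_map_id0 ?mdivz0 //.
by rewrite -polyC_natr coefCM IHk.
Qed.

Lemma mkill_mdivz (Z : pred nat) k (q : mp k) d :
  mkill Z k (mdivz q d) = mdivz (mkill Z k q) d.
Proof.
elim: k q => [//|k IHk] q /=; case: (Z k) => /=.
  rewrite !horner_evalE !horner_coef0 coef_map_id0 ?mdivz0 // IHk.
  apply/polyP => i; rewrite coef_map_id0 ?mdivz0 // !coefC.
  by case: (i == 0)%N; rewrite ?mdivz0.
by apply/polyP => i; rewrite !coef_map_id0 ?mdivz0 ?rmorph0 ?IHk.
Qed.

Lemma mkill_mvar (Z : pred nat) k i : (i < k)%N ->
  mkill Z k (mvar k i) = if Z i then 0 else mvar k i.
Proof.
elim: k => [//|k IHk] i_lt /=; case: eqP => [->|/eqP i_neq].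
  case: (Z k) => /=; last by rewrite map_polyX.
  by rewrite horner_evalE horner_coef0 coefX rmorph0.
have i_lt' : (i < k)%N by rewrite ltnS leq_eqVlt (negbTE i_neq) in i_lt.
have -> : (if Z i then 0 else (mvar k i)%:P) = (mkill Z k (mvar k i))%:P :> {poly mp k}.
  by rewrite IHk //; case: (Z i).
by case: (Z k) => /=; rewrite ?horner_evalE ?hornerC ?map_polyC.
Qed.

Section Evaluation.
Variable A : comNzRingType.
Implicit Type x : nat -> A.

Lemma mev0 k x : mev (0 : mp k) x = 0.
Proof. by case: k => [|k] /=; [rewrite mulr0z | rewrite size_poly0 big_ord0]. Qed.

Lemma mev_widen k (q : mp k.+1) x n : (size (q : {poly mp k}) <= n)%N ->
  mev q x = \sum_(i < n) mev (q : {poly mp k})`_i x * x k ^+ i.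
Proof.
move=> size_le /=; rewrite (big_ord_widen n (fun i => mev _`_i x * x k ^+ i) size_le).
rewrite big_mkcond /=; apply: eq_bigr => i _.
by case: ltnP => // ?; rewrite nth_default // mev0 mul0r.
Qed.

Lemma mevC k (c : mp k) x : mev (c%:P : mp k.+1) x = mev c x.
Proof.
by rewrite (@mev_widen k _ x 1) ?size_polyC_leq1 // big_ord1 coefC /= expr0 mulr1.
Qed.

Lemma mev1 k x : mev (1 : mp k) x = 1.
Proof.
elim: k => [|k IHk]; first by rewrite /= mulr1z.
by rewrite -[1 : mp k.+1]/((1 : mp k)%:P) mevC IHk.
Qed.

Lemma mevD k (q r : mp k) x : mev (q + r) x = mev q x + mev r x.
Proof.
elim: k q r => [|k IHk] q r; first exact: intrD.
set n := maxn (size (q : {poly mp k})) (size (r : {poly mp k})).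
rewrite (@mev_widen k (q + r) x n) ?size_polyD //.
rewrite (@mev_widen k q x n) ?leq_maxl // (@mev_widen k r x n) ?leq_maxr //.
by rewrite -big_split /=; apply: eq_bigr => i _; rewrite coefD IHk mulrDl.
Qed.

Lemma mev_mvar k i x : (i < k)%N -> mev (mvar k i) x = x i.
Proof.
elim: k => [//|k IHk] i_lt; rewrite [mvar _ _]/=; case: eqP => [->|/eqP i_neq].
  rewrite (@mev_widen k 'X x 2) ?size_polyX // big_ord_recr big_ord1 /=.
  by rewrite !coefX /= mev0 mul0r add0r mev1 mul1r expr1.
by rewrite mevC IHk // -ltnS ltn_neqAle i_neq.
Qed.

Lemma mev_mkill (Z : pred nat) k (q : mp k) x :
  (forall j, (j < k)%N -> Z j -> x j = 0) -> mev (mkill Z k q) x = mev q x.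
Proof.
elim: k q => [//|k IHk] q x_Z.
have x_Z' j : (j < k)%N -> Z j -> x j = 0 by move/ltnW; apply: x_Z.
rewrite mkillS; case Zk: (Z k).
  rewrite mevC IHk //.
  rewrite (@mev_widen k q x (size (q : {poly mp k})).+1) // big_ord_recl /= expr0 mulr1.
  by rewrite big1 ?addr0 // => i _; rewrite x_Z // expr0n mulr0.
rewrite (@mev_widen k _ x (size (q : {poly mp k}))) ?size_poly //.
by apply: eq_bigr => i _; rewrite coef_map_id0 ?rmorph0 // IHk.
Qed.

End Evaluation.

Lemma size_Slist p s n : size (Slist p s n) = n.+1.
Proof. by elim: n => [//|n IHn] /=; rewrite size_rcons IHn. Qed.

Lemma nth_Slist p s n i : (i <= n)%N -> nth 0 (Slist p s n) i = Spol p s i.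
Proof.
elim: n i => [|n IHn] i; first by case: i.
rewrite leq_eqVlt => /predU1P[-> //|i_lt].
by rewrite /= nth_rcons size_Slist i_lt IHn.
Qed.

Lemma SpolS p s n : Spol p s n.+1 =
  mdivz (wittpol p n.+1 (wX s) + wittpol p n.+1 (wY s)
         - \sum_(i < n.+1) (p ^ i)%:R * Spol p s i ^+ (p ^ (n.+1 - i))) (p ^ n.+1)%:Z.
Proof.
rewrite /Spol /= nth_rcons size_Slist ltnn eqxx; congr (mdivz (_ - _) _).
by apply: eq_bigr => i _; rewrite nth_Slist // -ltnS.
Qed.

Lemma exprDn_either0 (R : comNzRingType) (a b : R) m : a = 0 \/ b = 0 -> (0 < m)%N ->
  (a + b) ^+ m = a ^+ m + b ^+ m.
Proof. by case=> -> m_gt0; rewrite ?add0r ?addr0 expr0n gtn_eqF ?add0r ?addr0. Qed.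

Lemma mkill_Spol (Z : pred nat) p s n : (0 < p)%N -> (n < s)%N ->
  (forall j, (j < n)%N -> Z j || Z (s + j)) ->
  mkill Z (2 * s) (Spol p s n) = mkill Z (2 * s) (wX s n) + mkill Z (2 * s) (wY s n).
Proof.
move=> p_gt0; elim/ltn_ind: n => -[_ _ _|n IHn n_lt Z_n].
  by rewrite /Spol /= rmorphD.
set f := mkill Z (2 * s).
have kill_XY j : (j < n.+1)%N -> f (wX s j) = 0 \/ f (wY s j) = 0.
  move=> j_lt; rewrite /f /wX /wY !mkill_mvar; try lia.
  by case/orP: (Z_n j j_lt) => ->; [left | right].
have fS j : (j < n.+1)%N -> f (Spol p s j) = f (wX s j) + f (wY s j).
  by move=> j_lt; apply: IHn => // [|l l_lt]; [lia | apply: Z_n; lia].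
rewrite SpolS mkill_mdivz !rmorphB !rmorphD !rmorph_sum /=.
under eq_bigr do rewrite rmorphM (rmorph_nat f) (rmorphXn f).
under [X in _ + X - _]eq_bigr do rewrite rmorphM (rmorph_nat f) (rmorphXn f).
under [X in _ - X]eq_bigr => j _ do rewrite rmorphM (rmorph_nat f) (rmorphXn f)
  (fS _ (ltn_ord j)) (exprDn_either0 (kill_XY _ (ltn_ord j))) ?expn_gt0 ?p_gt0 // mulrDr.
rewrite big_split /= [\sum_(i < n.+2) _]big_ord_recr [X in _ + X - _]big_ord_recr /=.
rewrite subnn expn0 !expr1 addrACA [X in mdivz X _]addrC addKr -mulrDr.
by rewrite mulKmdivz // expn_gt0 p_gt0.
Qed.

Section Verschiebung.
Variable K : nzRingType.

Lemma wget_default n (a : wvec K n) m : (n <= m)%N -> wget a m = 0.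
Proof. by move=> n_le; rewrite /wget insubF // ltnNge n_le. Qed.

Lemma wget_val n (a : wvec K n) (i : 'I_n) : wget a i = a i.
Proof. by rewrite /wget valK. Qed.

Lemma wget1 (a : wvec K 1) m : wget a m = if m == 0%N then a ord0 else 0.
Proof. by case: m => [|m]; [exact: (wget_val a ord0) | rewrite wget_default]. Qed.

Lemma VtoE n s (a : wvec K n) (i : 'I_s) : Vto s a i = wget a i.
Proof. exact: ffunE. Qed.

Lemma wget_Vto n s (a : wvec K n) m :
  wget (Vto s a) m = if (m < s)%N then wget a m else 0.
Proof. by case: ltnP => m_lt; [rewrite /wget insubT /= ffunE | exact: wget_default]. Qed.

Lemma Vto_default n s (a : wvec K n) (i : 'I_s) : (n <= i)%N -> Vto s a i = 0.
Proof. by move=> n_le; rewrite VtoE wget_default. Qed.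

Lemma Vto_Vto n m s (a : wvec K n) : (n <= m)%N -> Vto s (Vto m a) = Vto s a.
Proof.
move=> n_le; apply/ffunP => i; rewrite !VtoE wget_Vto.
by case: ltnP => // m_le; rewrite wget_default // (leq_trans n_le).
Qed.

End Verschiebung.

Section WittAddition.
Variables (A : comNzRingType) (p : nat).
Hypothesis p_gt0 : (0 < p)%N.

Lemma mev_Spol s n (x : nat -> A) : (n < s)%N ->
  (forall j, (j < n)%N -> x j = 0 \/ x (s + j) = 0) ->
  mev (Spol p s n) x = x n + x (s + n).
Proof.
(* Evaluation at [x] factors through killing the variables where [x] vanishes. *)
move=> n_lt x_either0; pose Z j := x j == 0.
have x_Z j : (j < 2 * s)%N -> Z j -> x j = 0 by move=> _ /eqP.
rewrite -(mev_mkill _ x_Z) mkill_Spol //; last first.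
  by move=> j /x_either0[] x0; rewrite /Z x0 eqxx ?orbT.
by rewrite mevD !(mev_mkill _ x_Z) /wX /wY !mev_mvar //; lia.
Qed.

Lemma wadd_eq_add s (a b : wvec A s) (i : 'I_s) :
  (forall m : 'I_s, (i < m)%N -> a m = 0 \/ b m = 0) -> wadd p a b i = a i + b i.
Proof.
move=> ab_either0; have i_lt := ltn_ord i.
rewrite /wadd ffunE mev_Spol; first last.
- move=> j j_lt; have j_lt' : (s - 1 - j < s)%N by lia.
  rewrite ifT 1?ifF; try lia.
  rewrite (_ : (s + j - s)%N = j) /wget ?insubT; last by lia.
  by apply: (ab_either0 (Ordinal j_lt')) => /=; lia.
- lia.
rewrite ifT 1?ifF; try lia.
rewrite (_ : (s - 1 - (s + (s - 1 - i) - s))%N = i); last by lia.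
by rewrite (_ : (s - 1 - (s - 1 - i))%N = i) /wget ?valK //; lia.
Qed.

Lemma Vto1_wadd s (a b : wvec A 1) : Vto s (wadd p a b) = wadd p (Vto s a) (Vto s b).
Proof.
apply/ffunP => i; rewrite wadd_eq_add => [|m i_lt]; last first.
  by left; apply: Vto_default; apply: leq_ltn_trans i_lt.
rewrite !VtoE !wget1; case: eqP => _; last by rewrite addr0.
by rewrite wadd_eq_add // => m; rewrite (ord1 m).
Qed.

End WittAddition.

Section Filtration.
Variables (K : fieldType) (v : K -> int).

Lemma fil_Vto p n m s (z : wvec K m) : fil p v n z -> fil p v n (Vto s z).
Proof.
move=> fil_z i; rewrite VtoE /wget; case: insubP => [j _ j_val | _]; last by left.
by rewrite -j_val; exact: fil_z.
Qed.

Lemma filp1E p s (x : wvec K s) : (0 < p)%N -> filp p v 1 x <-> fil p v 0 x.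
Proof.
have min_logn1 : minn (logn p 1) s = 0%N by rewrite logn1 min0n.
move=> p_gt0; split=> [[y [z [fil_y _ ->]]] i | fil_x].
  rewrite wadd_eq_add // => [|m _]; last by right; rewrite Vto_default ?min_logn1.
  by rewrite Vto_default ?min_logn1 // addr0; exact: fil_y.
exists x, [ffun _ => 0]; split=> // [i|]; first by left; rewrite ffunE.
apply/ffunP => i; rewrite wadd_eq_add // => [|m _]; last by right; rewrite Vto_default ?min_logn1.
by rewrite Vto_default ?min_logn1 // addr0.
Qed.

End Filtration.

Section FilteredQuotient.
Variables (K : fieldType) (v : K -> int) (s : nat).
Hypothesis s_gt0 : (0 < s)%N.

Lemma filp2_Vto (a : wvec K 1) : filp 2 v 2 a -> filp 2 v 2 (Vto s a).
Proof.
case=> y [z [fil_y fil_z ->]].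
exists (Vto s y), (Vto (minn (logn 2 2) s) z); split; try exact: fil_Vto.
by rewrite Vto1_wadd // !Vto_Vto // leq_min geq_minl (leq_trans (geq_minr _ _)).
Qed.

Lemma filp1_Vto (a : wvec K 1) : filp 2 v 1 (Vto s a) <-> filp 2 v 1 a.
Proof.
rewrite !filp1E //; split=> [fil_Va i | fil_a]; last exact: fil_Vto.
by have := fil_Va (Ordinal s_gt0); rewrite VtoE (ord1 i) wget1.
Qed.

Lemma fil1_ge0 (y : wvec K s) (i : 'I_s) : fil 2 v 1 y -> (0 < i)%N ->
  y i = 0 \/ 0 <= (2 ^ i)%:Z * v (y i).
Proof.
move=> /(_ i) [->|y_ge] i_gt0; [by left | right].
have : (2 <= 2 ^ i)%N by rewrite -{1}(expn1 2) leq_exp2l.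
by move: y_ge; case: (lerP 0 (v (y i))) => *; nia.
Qed.

Lemma filp2_decomp (x : wvec K s) : filp 2 v 2 x ->
  exists (a : wvec K 1) (y : wvec K s),
    [/\ filp 2 v 2 a, filp 2 v 1 y & x = wadd 2 (Vto s a) y].
Proof.
case=> y0 [z [fil_y0 fil_z x_eq]].
have z_default m : (0 < m)%N -> wget z m = 0.
  by move=> m_gt0; rewrite wget_default // (leq_trans (geq_minl _ _) m_gt0).
have xE (i : 'I_s) : x i = y0 i + wget z i.
  rewrite x_eq wadd_eq_add ?VtoE // => m i_lt.
  by right; rewrite VtoE z_default // (leq_ltn_trans _ i_lt).
pose o := Ordinal s_gt0.
exists [ffun => x o], [ffun i => if val i == 0%N then 0 else x i]; split.
- exists [ffun => y0 o], (Vto (minn (logn 2 2) 1) z); split; last 2 first.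
  + exact: fil_Vto.
  + apply/ffunP => i; rewrite (ord1 i) wadd_eq_add // => [|m]; last by rewrite (ord1 m).
    by rewrite !ffunE xE wget_Vto.
  by move=> i; rewrite ffunE (ord1 i); exact: (fil_y0 o).
- apply/filp1E => // i; rewrite ffunE; case: eqP => [_|/eqP i_neq0]; first by left.
  by rewrite xE z_default ?lt0n // addr0; apply: fil1_ge0; rewrite ?lt0n.
apply/ffunP => i; rewrite wadd_eq_add // => [|m i_lt]; last first.
  by left; apply: Vto_default; apply: leq_ltn_trans i_lt.
rewrite VtoE wget1 !ffunE; case: eqP => [i0|_]; last by rewrite add0r.
by rewrite addr0; congr (x _); apply: val_inj.
Qed.

End FilteredQuotient.

Theorem lemma1p9 (K : fieldType) (v : K -> int)
  (hv : is_normalized_dvaluation v) (hc : dv_complete v)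
  (hchar : 2%N \in [pchar K]) (s : nat) (hs : (1 <= s)%N) :
  [/\ forall a b : wvec K 1,
        Vto s (wadd 2 a b) = wadd 2 (Vto s a) (Vto s b),
      forall a : wvec K 1, filp 2 v 2 a -> filp 2 v 2 (Vto s a),
      forall a : wvec K 1, filp 2 v 1 a -> filp 2 v 1 (Vto s a),
      forall a : wvec K 1, filp 2 v 2 a -> filp 2 v 1 (Vto s a) -> filp 2 v 1 a
    & forall x : wvec K s, filp 2 v 2 x ->
        exists (a : wvec K 1) (y : wvec K s),
          [/\ filp 2 v 2 a, filp 2 v 1 y & x = wadd 2 (Vto s a) y]].
Proof.
split=> [a b | a fil_a | a fil_a | a _ fil_Va | x fil_x].
- exact: Vto1_wadd.
- exact: (filp2_Vto hs fil_a).
- exact/(filp1_Vto v hs).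
- exact/(filp1_Vto v hs).
- exact: (filp2_decomp hs fil_x).
Qed.
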